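(* Let $\theta\in\mathbb{R}^q$ be constant and consider the perturbed regression $y=\phi^\top\theta+d$ with $d$ a bounded scalar signal, in CT or DT, where $\phi$ is bounded (and continuous in CT) and the unperturbed regression is identifiable, i.e. there exist $q$ time instants (positive reals in CT, nonnegative integers in DT) $\tau_1,\dots,\tau_q$ with $\mathrm{rank}[\phi(\tau_1)|\cdots|\phi(\tau_q)]=q$. Let the estimator be: in CT, $\dot{\hat\theta}_g=-\gamma_g(t)\phi\phi^\top\hat\theta_g+\gamma_g(t)\phi y$, $\hat\theta_g(0)=\theta_{g0}$, $\dot\Phi=-\gamma_g(t)\phi\phi^\top\Phi$, $\Phi(0)=I_q$, $\dot{\hat\theta}=\gamma\Delta(Y-\Delta\hat\theta)$; in DT, with $g(k)=1/(\gamma_g(k)+|\phi(k)|^2)$, $\hat\theta_g(k+1)=(I_q-g\phi\phi^\top)\hat\theta_g(k)+g\phi y(k)$, $\Phi(k+1)=(I_q-g\phi\phi^\top)\Phi(k)$, $\Phi(0)=I_q$, $\hat\theta(k+1)=\hat\theta(k)+\frac{\Delta(k)}{\gamma+\Delta^2(k)}(Y(k)-\Delta(k)\hat\theta(k))$; here $\gamma>0$, $\theta_{g0},\hat\theta(0)\in\mathbb{R}^q$ arbitrary, $\mathcal D=I_q-\Phi$, $\Delta=\det\{\mathcal D\}$, $Y=\mathrm{adj}\{\mathcal D\}(\hat\theta_g-\Phi\theta_{g0})$. Suppose the gain $\gamma_g(\cdot)>0$ (continuous in CT) satisfies $\int_0^\infty\gamma_g(t)\,dt<\infty$ in CT, respectively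 $\sum_{k=0}^\infty 1/\gamma_g(k)<\infty$ in DT. Then the parameter error $\tilde\theta:=\hat\theta-\theta$ remains bounded. *)

From HB Require Import structures.
From mathcomp Require Import all_boot all_order all_algebra.
From mathcomp Require Import all_classical all_reals all_analysis.
Set Implicit Arguments. Unset Strict Implicit. Unset Printing Implicit Defensive.
Import Order.TTheory GRing.Theory Num.Theory.
Import numFieldNormedType.Exports.
Local Open Scope ring_scope.

Definition drem_D {R : pzRingType} {q : nat} (Phi : 'M[R]_q) : 'M[R]_q :=
  1%:M - Phi.
Definition drem_Delta {R : comPzRingType} {q : nat} (Phi : 'M[R]_q) : R :=
  \det (drem_D Phi).
Definition drem_Y {R : comPzRingType} {q : nat} (Phi : 'M[R]_q)
  (thg thg0 : 'cV[R]_q) : 'cV[R]_q :=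
  \adj (drem_D Phi) *m (thg - Phi *m thg0).

(* Write [D = 1 - Phi], [u = thh - theta] and [e = thg - Phi thg0 - D theta]
   for the part of the gradient estimate caused by the perturbation [d].
   [Phi] is a contraction, and identifiability makes it a strict contraction
   after some time [T], uniformly so since [1 - Phi(T)^T Phi(T)] is positive
   definite; hence [D] is invertible with a uniform bound on its inverse from
   [T] on.  The perturbation enters [|e|^2] with weight [1 / gamma_g] in
   discrete time and [gamma_g] in continuous time, so summability of the gain
   keeps [e] bounded.  Finally [adj D e = Delta v] with [D v = e], so that
   [Y - Delta thh = Delta (v - u)]: the DREM update moves [u] towards the
   bounded [v] (a convex combination in discrete time, a flow decreasing
   [|u|^2] whenever [|u| >= |v|] in continuous time), and [u] stays bounded. *)

From HB Require Import structures.
From mathcomp Require Import all_boot all_order all_algebra.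
From mathcomp Require Import all_classical all_reals all_analysis.
From mathcomp Require Import measurable_realfun.
From mathcomp.algebra_tactics Require Import ring lra.
Import Order.TTheory GRing.Theory Num.Theory.
Import numFieldNormedType.Exports.
Local Open Scope classical_set_scope.
Local Open Scope ring_scope.
Set Implicit Arguments. Unset Strict Implicit. Unset Printing Implicit Defensive.

(** * Euclidean geometry of column vectors *)

Lemma quadratic_ge0_discr (R : realFieldType) (a b c : R) : 0 <= c ->
  (forall r, 0 <= a + 2 * r * b + r ^+ 2 * c) -> b ^+ 2 <= a * c.
Proof.
move=> c_ge0 quad_ge0.
have a_ge0 : 0 <= a by have := quad_ge0 0; lra.
have [c_gt0|] := ltrP 0 c.
  have := quad_ge0 (- b / c).
  have -> : a + 2 * (- b / c) * b + (- b / c) ^+ 2 * c = a - b ^+ 2 / c.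
    by field; rewrite gt_eqF.
  by rewrite subr_ge0 ler_pdivrMr.
move=> c_le0; have c0 : c = 0 by apply/eqP; rewrite eq_le c_le0 c_ge0.
rewrite c0 mulr0; have [-> | b_neq0] := eqVneq b 0; first by rewrite expr0n.
have := quad_ge0 (- (a + 1) / (2 * b)); rewrite c0.
have -> : a + 2 * (- (a + 1) / (2 * b)) * b + (- (a + 1) / (2 * b)) ^+ 2 * 0
  = -1 by field.
lra.
Qed.

Lemma contraction_gap (R : realFieldType) (a b c e : R) :
  0 <= a -> 0 <= b -> c ^+ 2 <= a * b -> b <= (1 - e) * a -> 0 < e -> e <= 1 ->
  e ^+ 2 / 4 * a <= a - 2 * c + b.
Proof.
move=> a_ge0 b_ge0 cab ba e_gt0 e_le1.
(* AM-GM with weight [t = 1 - e/2]: [2 t c <= t^2 a + b]. *)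
set t := 1 - e / 2.
have t_gt0 : 0 < t by rewrite /t; lra.
have amgm : 2 * t * c <= t ^+ 2 * a + b.
  have rhs_ge0 : 0 <= t ^+ 2 * a + b by have := sqr_ge0 t; nra.
  have [lhs_ge0|] := lerP 0 (2 * t * c); last lra.
  rewrite -(@ler_pXn2r _ 2) // ?nnegrE //.
  have := sqr_ge0 (t ^+ 2 * a - b); have := sqr_ge0 t; nra.
have : t * (e ^+ 2 / 4 * a) <= t * (a - 2 * c + b).
  rewrite /t in amgm *; have : 0 <= e * a by nra.
  nra.
by rewrite ler_pM2l.
Qed.

Section VectorDot.
Variables (R : realFieldType) (q : nat).
Implicit Types (u v x : 'cV[R]_q) (A : 'M[R]_q).

Definition vdot u v : R := \sum_i u i 0 * v i 0.

Lemma vdotC u v : vdot u v = vdot v u.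
Proof. by apply: eq_bigr => i _; rewrite mulrC. Qed.

Lemma vdotDl u v x : vdot (u + v) x = vdot u x + vdot v x.
Proof. by rewrite /vdot -big_split; apply: eq_bigr => i _; rewrite mxE mulrDl. Qed.

Lemma vdotDr u v x : vdot x (u + v) = vdot x u + vdot x v.
Proof. by rewrite vdotC vdotDl !(vdotC x). Qed.

Lemma vdotZl a u v : vdot (a *: u) v = a * vdot u v.
Proof. by rewrite /vdot mulr_sumr; apply: eq_bigr => i _; rewrite mxE mulrA. Qed.

Lemma vdotZr a u v : vdot u (a *: v) = a * vdot u v.
Proof. by rewrite vdotC vdotZl vdotC. Qed.

Lemma vdotNl u v : vdot (- u) v = - vdot u v.
Proof. by rewrite -scaleN1r vdotZl mulN1r. Qed.

Lemma vdotNr u v : vdot u (- v) = - vdot u v.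
Proof. by rewrite vdotC vdotNl vdotC. Qed.

Lemma vdotBl u v x : vdot (u - v) x = vdot u x - vdot v x.
Proof. by rewrite vdotDl vdotNl. Qed.

Lemma vdotBr u v x : vdot x (u - v) = vdot x u - vdot x v.
Proof. by rewrite vdotDr vdotNr. Qed.

Lemma vdot0l u : vdot 0 u = 0.
Proof. by rewrite /vdot big1 // => i _; rewrite mxE mul0r. Qed.

Lemma vdot0r u : vdot u 0 = 0.
Proof. by rewrite vdotC vdot0l. Qed.

Lemma vdot_mulmx u A v : vdot u (A *m v) = vdot (A^T *m u) v.
Proof.
rewrite /vdot; under eq_bigr do rewrite mxE mulr_sumr.
rewrite exchange_big /=; apply: eq_bigr => j _.
by rewrite mxE mulr_suml; apply: eq_bigr => i _; rewrite !mxE; ring.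
Qed.

Lemma mulmx_trmx00 u v : (u^T *m v) 0 0 = vdot u v.
Proof. by rewrite mxE; apply: eq_bigr => k _; rewrite mxE. Qed.

Lemma outer_mulmx u x : (u *m u^T) *m x = vdot u x *: u.
Proof.
apply/matrixP => i j; rewrite (ord1 j) !mxE.
under eq_bigr do rewrite mxE big_ord1 !mxE.
by rewrite /vdot mulr_suml; apply: eq_bigr => k _; rewrite [ord0]ord1; ring.
Qed.

Lemma rank1_update_mulmx (g : R) u x :
  (1%:M - g *: (u *m u^T)) *m x = x - (g * vdot u x) *: u.
Proof. by rewrite mulmxBl mul1mx -scalemxAl outer_mulmx scalerA. Qed.

Lemma vdot_self_ge0 u : 0 <= vdot u u.
Proof. by apply: sumr_ge0 => i _; rewrite -expr2 sqr_ge0. Qed.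

Lemma sqr_coef_le_vdot u i : u i 0 ^+ 2 <= vdot u u.
Proof.
rewrite /vdot (bigD1 i) //= expr2 lerDl.
by apply: sumr_ge0 => j _; rewrite -expr2 sqr_ge0.
Qed.

Lemma vdot_self_eq0 u : vdot u u = 0 -> u = 0.
Proof.
move=> uu0; apply/matrixP => i j; rewrite (ord1 j) mxE.
have := sqr_coef_le_vdot u i; rewrite uu0 => ui_le0.
by apply/eqP; rewrite -sqrf_eq0 eq_le ui_le0 sqr_ge0.
Qed.

Lemma vdot_mul2_le u v : 2 * vdot u v <= vdot u u + vdot v v.
Proof. by have := vdot_self_ge0 (u - v); rewrite vdotBl !vdotBr (vdotC v u); lra. Qed.

Lemma vdot_subZ x u c :
  vdot (x - c *: u) (x - c *: u) = vdot x x - 2 * c * vdot u x + c ^+ 2 * vdot u u.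
Proof. by rewrite vdotBl !vdotBr !vdotZl !vdotZr (vdotC x u); ring. Qed.

Lemma rank1_update_sqnorm (g : R) u x :
  let y := (1%:M - g *: (u *m u^T)) *m x in
  vdot y y = vdot x x - g * vdot u x ^+ 2 * (2 - g * vdot u u).
Proof. by rewrite /= rank1_update_mulmx vdot_subZ; ring. Qed.

Lemma vdot_convex (l : R) u v : 0 <= l <= 1 ->
  vdot ((1 - l) *: u + l *: v) ((1 - l) *: u + l *: v)
  <= (1 - l) * vdot u u + l * vdot v v.
Proof.
move=> /andP[l_ge0 l_le1]; rewrite !vdotDl !vdotDr !vdotZl !vdotZr (vdotC v u).
have := vdot_mul2_le u v; have : 0 <= l * (1 - l) by apply: mulr_ge0; lra.
nra.
Qed.

Lemma form_CauchySchwarz (B : 'cV[R]_q -> 'cV[R]_q -> R) :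
  (forall u v, B u v = B v u) -> (forall u, 0 <= B u u) ->
  (forall u v x, B (u + v) x = B u x + B v x) ->
  (forall a u v, B (a *: u) v = a * B u v) ->
  forall u v, B u v ^+ 2 <= B u u * B v v.
Proof.
move=> BC B_ge0 BDl BZl u v; apply: quadratic_ge0_discr; first exact: B_ge0.
have BDr a b c : B a (b + c) = B a b + B a c by rewrite BC BDl !(BC a).
have BZr a b c : B a (b *: c) = b * B a c by rewrite BC BZl BC.
move=> r; have := B_ge0 (u + r *: v).
by rewrite !BDl !BDr !BZl !BZr (BC v u); lra.
Qed.

Lemma vdot_CauchySchwarz u v : vdot u v ^+ 2 <= vdot u u * vdot v v.
Proof. exact: form_CauchySchwarz vdotC vdot_self_ge0 vdotDl vdotZl u v. Qed.

Lemma mx_norm_le_vdot u : `|u| <= 1 + vdot u u.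
Proof.
rewrite [leLHS]/Num.Def.normr/= mx_normrE.
apply: bigmax_le; first by have := vdot_self_ge0 u; lra.
move=> [i j] _ /=; rewrite (ord1 j).
have := sqr_coef_le_vdot u i.
have : `|u i 0| <= 1 + u i 0 ^+ 2.
  rewrite -(real_normK (num_real (u i 0))).
  by have := normr_ge0 (u i 0); nra.
lra.
Qed.

Definition frobenius A : R := \sum_i \sum_j A i j ^+ 2.

Lemma frobenius_ge0 A : 0 <= frobenius A.
Proof. by apply: sumr_ge0 => i _; apply: sumr_ge0 => j _; exact: sqr_ge0. Qed.

Lemma vdot_mulmx_le_frobenius A x :
  vdot (A *m x) (A *m x) <= frobenius A * vdot x x.
Proof.
rewrite /frobenius mulr_suml; apply: ler_sum => i _.
pose r : 'cV[R]_q := \col_j A i j.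
have -> : (A *m x) i 0 = vdot r x by rewrite mxE; apply: eq_bigr => j _; rewrite mxE.
have -> : \sum_j A i j ^+ 2 = vdot r r by apply: eq_bigr => j _; rewrite mxE expr2.
by rewrite -expr2; exact: vdot_CauchySchwarz.
Qed.

Lemma mulmx_eq0_unitmx A : (forall x, A *m x = 0 -> x = 0) -> A \in unitmx.
Proof.
move=> injA; rewrite unitmxE unitfE -det_tr; apply/negP => /det0P[v v_neq0 vA0].
have : A *m v^T = 0 by rewrite -[A *m v^T]trmxK trmx_mul trmxK vA0 trmx0.
move/injA/(congr1 trmx); rewrite trmxK trmx0 => v0.
by rewrite v0 eqxx in v_neq0.
Qed.

Lemma rank_vdot_eq0 (f : 'I_q -> 'cV[R]_q) x :
  \rank (\matrix_(i, j) f j i 0) = q -> (forall j, vdot x (f j) = 0) -> x = 0.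
Proof.
set M := \matrix_(i, j) _ => rkM xf0.
have M_unit : M \in unitmx by rewrite -row_free_unit /row_free rkM.
have : x^T *m M = 0.
  apply/matrixP => i j; rewrite (ord1 i) [RHS]mxE -[RHS](xf0 j) mxE.
  by apply: eq_bigr => k _; rewrite !mxE.
move=> /(congr1 (mulmx^~ (invmx M))); rewrite mul0mx -mulmxA mulmxV //.
by rewrite mulmx1 => /(congr1 trmx); rewrite trmxK trmx0.
Qed.

End VectorDot.

Section Contraction.
Variables (R : realFieldType) (q : nat).
Implicit Types (x : 'cV[R]_q) (P T D : 'M[R]_q).

Lemma sym_form_sqr_le T : T^T = T ->
  (forall x, 0 <= vdot x (T *m x) <= vdot x x) ->
  forall x, vdot (T *m x) (T *m x) <= vdot x (T *m x).
Proof.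
move=> T_sym T_bnd x; set y := T *m x.
pose B u v := vdot u (T *m v).
have BC u v : B u v = B v u by rewrite /B vdot_mulmx T_sym vdotC.
have BDl u v w : B (u + v) w = B u w + B v w by rewrite /B vdotDl.
have BZl a u v : B (a *: u) v = a * B u v by rewrite /B vdotZl.
have B_ge0 u : 0 <= B u u by have /andP[] := T_bnd u.
have Bxy : B x y = vdot y y by rewrite /B vdot_mulmx T_sym.
have Byy : B y y <= vdot y y by have /andP[] := T_bnd y.
have := form_CauchySchwarz BC B_ge0 BDl BZl x y; rewrite Bxy -/(B x x) => cs.
have [y0|y_gt0] := eqVneq (vdot y y) 0; first by rewrite y0 B_ge0.
have {}y_gt0 : 0 < vdot y y by rewrite lt_def y_gt0 vdot_self_ge0.
rewrite -(ler_pM2r y_gt0) -expr2; apply: le_trans cs _.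
by rewrite ler_wpM2l.
Qed.

(* [1 - P^T P] is positive definite, hence invertible, and the Frobenius norm
   of its inverse gives the rate. *)
Lemma contraction_uniform P :
  (forall x, x != 0 -> vdot (P *m x) (P *m x) < vdot x x) ->
  exists2 eps, 0 < eps <= 1 &
    forall x, vdot (P *m x) (P *m x) <= (1 - eps) * vdot x x.
Proof.
move=> P_lt; pose T := 1%:M - P^T *m P.
have TE x : vdot x (T *m x) = vdot x x - vdot (P *m x) (P *m x).
  by rewrite mulmxBl mul1mx vdotBr -mulmxA (vdot_mulmx x) trmxK.
have T_bnd x : 0 <= vdot x (T *m x) <= vdot x x.
  rewrite TE subr_ge0 gerBl vdot_self_ge0 andbT.
  have [->|x_neq0] := eqVneq x 0; first by rewrite mulmx0 lexx.
  exact/ltW/P_lt.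
have T_sym : T^T = T by rewrite /T linearB /= trmx1 trmx_mul trmxK.
have T_unit : T \in unitmx.
  apply: mulmx_eq0_unitmx => x Tx0; apply/eqP/negPn/negP => x_neq0.
  by have := P_lt x x_neq0; have := TE x; rewrite Tx0 vdot0r; lra.
pose F := frobenius (invmx T) + 1.
have F_gt0 : 0 < F by rewrite /F; have := frobenius_ge0 (invmx T); lra.
exists F^-1; first by rewrite invr_gt0 F_gt0 invf_le1 // /F lerDr frobenius_ge0.
move=> x; have : vdot x x <= F * vdot x (T *m x).
  rewrite -{1 2}[x](mulKmx T_unit); apply: le_trans (vdot_mulmx_le_frobenius _ _) _.
  apply: ler_pM; rewrite ?frobenius_ge0 ?vdot_self_ge0 ?lerDl //.
  exact: sym_form_sqr_le.
rewrite TE -ler_pdivrMl // => x_le; rewrite mulrBl mul1r.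
by move: x_le; rewrite mulrC; lra.
Qed.

Lemma subr1mx_sqr_lower P eps : 0 < eps <= 1 ->
  (forall x, vdot (P *m x) (P *m x) <= (1 - eps) * vdot x x) ->
  forall x, eps ^+ 2 / 4 * vdot x x <= vdot ((1%:M - P) *m x) ((1%:M - P) *m x).
Proof.
move=> /andP[eps_gt0 eps_le1] P_le x.
rewrite mulmxBl mul1mx vdotBl !vdotBr (vdotC (P *m x) x).
have -> : vdot x x - vdot x (P *m x) - (vdot x (P *m x) - vdot (P *m x) (P *m x))
  = vdot x x - 2 * vdot x (P *m x) + vdot (P *m x) (P *m x) by ring.
by apply: contraction_gap; rewrite ?vdot_self_ge0 ?vdot_CauchySchwarz.
Qed.

Lemma adj_mulmx_bounded D kk : 0 < kk ->
  (forall x, kk * vdot x x <= vdot (D *m x) (D *m x)) ->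
  forall e, exists2 v, \adj D *m e = \det D *: v & kk * vdot v v <= vdot e e.
Proof.
move=> kk_gt0 D_lower.
have D_unit : D \in unitmx.
  apply: mulmx_eq0_unitmx => x Dx0; apply: vdot_self_eq0; apply/eqP.
  rewrite eq_le vdot_self_ge0 andbT -(pmulr_rle0 _ kk_gt0).
  by have := D_lower x; rewrite Dx0 vdot0r.
move=> e; exists (invmx D *m e); last by have := D_lower (invmx D *m e); rewrite mulKVmx.
have det_neq0 : \det D != 0 by rewrite -unitfE -unitmxE.
by rewrite /invmx D_unit -scalemxAl scalerA mulfV // scale1r.
Qed.

End Contraction.

(** * The DREM identity *)

(* The part of [thg] not explained by the regression: it vanishes when
   [d = 0], since then [thg = Phi thg0 + (1 - Phi) theta]. *)
Definition drem_error (R : comPzRingType) (q : nat) (Phi : 'M[R]_q)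
  (thg thg0 theta : 'cV[R]_q) : 'cV[R]_q :=
  thg - Phi *m thg0 - drem_D Phi *m theta.

Lemma drem_errorE (R : comPzRingType) (q : nat) (Phi : 'M[R]_q)
    (thg thg0 theta : 'cV[R]_q) :
  drem_error Phi thg thg0 theta = thg - Phi *m (thg0 - theta) - theta.
Proof.
rewrite /drem_error /drem_D mulmxBl mul1mx mulmxBr.
by apply/matrixP => i j; rewrite !mxE; ring.
Qed.

Lemma drem_Y_sub (R : comPzRingType) (q : nat) (Phi : 'M[R]_q)
    (thg thg0 theta th v : 'cV[R]_q) :
  \adj (drem_D Phi) *m drem_error Phi thg thg0 theta = drem_Delta Phi *: v ->
  drem_Y Phi thg thg0 - drem_Delta Phi *: th
  = drem_Delta Phi *: (v - (th - theta)).
Proof.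
rewrite /drem_Y /drem_Delta => adj_e.
have -> : thg - Phi *m thg0 = drem_D Phi *m theta + drem_error Phi thg thg0 theta.
  by rewrite /drem_error [RHS]addrC subrK.
rewrite mulmxDr adj_e mulmxA mul_adj_mx mul_scalar_mx.
by apply/matrixP => i j; rewrite !mxE; ring.
Qed.

(** * Discrete time *)

Lemma nneseries_partial_bounded (R : realType) (u : nat -> R) :
  (forall n, 0 <= u n) -> (\sum_(0 <= k <oo) (u k)%:E < +oo)%E ->
  exists S, forall n, \sum_(0 <= k < n) u k <= S.
Proof.
move=> u_ge0 u_fin; set L := (\sum_(0 <= k <oo) _)%E in u_fin.
have L_ge0 : (0 <= L)%E by apply: nneseries_ge0 => n _; rewrite lee_fin.
have L_num : L \is a fin_num by rewrite ge0_fin_numE.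
exists (fine L) => n; rewrite -lee_fin fineK // -sumEFin.
by apply: nneseries_lim_ge => k _ _; rewrite lee_fin.
Qed.

Lemma eventually_bounded_nat (R : realDomainType) (f : nat -> R) K M :
  (forall k, (K <= k)%N -> f k <= M) -> exists M', forall k, f k <= M'.
Proof.
move=> f_le; exists (`|M| + \sum_(j < K) `|f j|) => k.
have sum_ge0 : 0 <= \sum_(j < K) `|f j| by apply: sumr_ge0 => j _.
have [k_lt|K_le] := ltnP k K; last first.
  by apply: le_trans (f_le k K_le) (le_trans (ler_norm M) _); rewrite lerDl.
apply: le_trans (ler_norm (f k)) _; rewrite -[`|f k|]add0r lerD //.
by rewrite (bigD1 (Ordinal k_lt)) //= lerDl; apply: sumr_ge0.
Qed.

Lemma max_step_bounded (R : realDomainType) (f : nat -> R) K B :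
  (forall k, (K <= k)%N -> f k.+1 <= Num.max (f k) B) ->
  forall k, (K <= k)%N -> f k <= Num.max (f K) B.
Proof.
move=> f_step k /subnKC <-; elim: (k - K)%N => [|n IH]; first by rewrite addn0 le_max lexx.
by rewrite addnS; apply: le_trans (f_step _ (leq_addr _ _)) _; rewrite ge_max IH le_max lexx orbT.
Qed.

Lemma rank1_update_perturbed_sqnorm (R : realFieldType) (q : nat)
    (u e : 'cV[R]_q) (gm g dd : R) :
  0 < gm -> g = (gm + vdot u u)^-1 ->
  vdot ((1%:M - g *: (u *m u^T)) *m e + (g * dd) *: u)
       ((1%:M - g *: (u *m u^T)) *m e + (g * dd) *: u)
  <= vdot e e + dd ^+ 2 / gm.
Proof.
move=> gm_gt0 gE; set y := _ + _; have uu_ge0 := vdot_self_ge0 u.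
have g_gt0 : 0 < g by rewrite gE invr_gt0; lra.
have g_uu : g * vdot u u <= 1 by rewrite gE mulrC ler_pdivrMr ?mul1r; lra.
have g_le : g <= gm^-1 by rewrite gE lef_pV2 ?posrE //; lra.
have -> : y = e - (g * (vdot u e - dd)) *: u.
  by rewrite /y rank1_update_mulmx mulrBr scalerBl opprB addrA addrAC.
rewrite vdot_subZ; set s := vdot u e.
have : g * dd ^+ 2 <= dd ^+ 2 / gm by rewrite mulrC ler_wpM2l // sqr_ge0.
have -> : (g * (s - dd)) ^+ 2 * vdot u u = g * (s - dd) ^+ 2 * (g * vdot u u) by ring.
have : g * (s - dd) ^+ 2 * (g * vdot u u) <= g * (s - dd) ^+ 2.
  by rewrite ler_piMr // mulr_ge0 ?sqr_ge0 ?(ltW g_gt0).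
have : 0 <= g * s ^+ 2 by rewrite mulr_ge0 ?sqr_ge0 ?(ltW g_gt0).
nra.
Qed.

Section DiscreteTime.
Variables (R : realType) (q : nat) (phi : nat -> 'cV[R]_q) (gm : nat -> R).
Hypothesis gm_gt0 : forall k, 0 < gm k.

Definition dt_gain k := (gm k + vdot (phi k) (phi k))^-1.
Let A k := 1%:M - dt_gain k *: (phi k *m (phi k)^T).

Lemma dt_gain_gt0 k : 0 < dt_gain k.
Proof. by rewrite invr_gt0 ltr_wpDr ?vdot_self_ge0. Qed.

Lemma dt_gain_vdot_le1 k : dt_gain k * vdot (phi k) (phi k) <= 1.
Proof.
move: (gm_gt0 k) (vdot_self_ge0 (phi k)) => gm_k_gt0 pp_ge0.
by rewrite /dt_gain mulrC ler_pdivrMr ?mul1r; lra.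
Qed.

Variable Phi : nat -> 'M[R]_q.
Hypothesis Phi0 : Phi 0%N = 1%:M.
Hypothesis PhiS : forall k, Phi k.+1 = A k *m Phi k.

Lemma dt_Phi_sqnormS k x :
  vdot (Phi k.+1 *m x) (Phi k.+1 *m x) = vdot (Phi k *m x) (Phi k *m x)
    - dt_gain k * vdot (phi k) (Phi k *m x) ^+ 2
      * (2 - dt_gain k * vdot (phi k) (phi k)).
Proof. by rewrite PhiS -mulmxA rank1_update_sqnorm. Qed.

Lemma dt_Phi_nonincr x j k : (j <= k)%N ->
  vdot (Phi k *m x) (Phi k *m x) <= vdot (Phi j *m x) (Phi j *m x).
Proof.
move=> /subnKC <-; elim: (k - j)%N => [|n IH]; first by rewrite addn0.
apply: le_trans IH; rewrite addnS dt_Phi_sqnormS gerBl.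
apply: mulr_ge0; first by rewrite mulr_ge0 ?sqr_ge0 ?(ltW (dt_gain_gt0 _)).
by have := dt_gain_vdot_le1 (j + n); lra.
Qed.

Section Fixed.
Variables (K : nat) (x : 'cV[R]_q).
Hypothesis PhiK_isometric : vdot x x <= vdot (Phi K *m x) (Phi K *m x).

Lemma dt_Phi_sqnorm_eq j : (j <= K)%N -> vdot (Phi j *m x) (Phi j *m x) = vdot x x.
Proof.
move=> jK; apply/eqP; rewrite eq_le.
have := dt_Phi_nonincr x (leq0n j); rewrite Phi0 mul1mx => ->.
exact: le_trans PhiK_isometric (dt_Phi_nonincr x jK).
Qed.

Lemma dt_Phi_orth j : (j < K)%N -> vdot (phi j) (Phi j *m x) = 0.
Proof.
move=> jK; have := dt_Phi_sqnormS j x.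
rewrite !dt_Phi_sqnorm_eq ?(ltnW jK) // => /eqP; rewrite -subr_eq0 opprB addrC subrK.
rewrite mulf_eq0 => /orP[|/eqP]; last by have := dt_gain_vdot_le1 j; lra.
by rewrite mulf_eq0 (gt_eqF (dt_gain_gt0 j)) sqrf_eq0 => /eqP.
Qed.

Lemma dt_Phi_fix j : (j <= K)%N -> Phi j *m x = x.
Proof.
elim: j => [_|j IH jK]; first by rewrite Phi0 mul1mx.
by rewrite PhiS -mulmxA rank1_update_mulmx dt_Phi_orth // IH 1?ltnW // mulr0 scale0r subr0.
Qed.

End Fixed.

Lemma dt_D_lower (tau : 'I_q -> nat) :
  \rank (\matrix_(i, j) phi (tau j) i 0) = q ->
  exists K kk, 0 < kk /\ forall k, (K <= k)%N ->
    forall x, kk * vdot x x <= vdot (drem_D (Phi k) *m x) (drem_D (Phi k) *m x).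
Proof.
move=> rank_q; pose K := (\sum_i tau i).+1.
have tau_lt i : (tau i < K)%N by rewrite ltnS (bigD1 i) //= leq_addr.
have PhiK_lt x : x != 0 -> vdot (Phi K *m x) (Phi K *m x) < vdot x x.
  move=> x_neq0; rewrite ltNge; apply/negP => PhiK_iso; move/negP: x_neq0; apply.
  apply/eqP/(rank_vdot_eq0 rank_q) => i; rewrite vdotC.
  by rewrite -{1}(dt_Phi_fix PhiK_iso (ltnW (tau_lt i))) (dt_Phi_orth PhiK_iso).
have [eps eps_01 PhiK_le] := contraction_uniform PhiK_lt.
exists K, (eps ^+ 2 / 4); split.
  by case/andP: eps_01 => eps_gt0 _; rewrite divr_gt0 ?exprn_gt0.
move=> k Kk; apply: subr1mx_sqr_lower => // x.
exact: le_trans (dt_Phi_nonincr x Kk) (PhiK_le x).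
Qed.

Variables (theta thg0 : 'cV[R]_q) (d : nat -> R) (thg : nat -> 'cV[R]_q).
Hypothesis thg_0 : thg 0%N = thg0.
Hypothesis thgS : forall k,
  thg k.+1 = A k *m thg k + (dt_gain k * (vdot (phi k) theta + d k)) *: phi k.

Let e k := drem_error (Phi k) (thg k) thg0 theta.

Lemma dt_errorS k : e k.+1 = A k *m e k + (dt_gain k * d k) *: phi k.
Proof.
rewrite /e /drem_error /drem_D thgS PhiS /A !mulmxBl !mul1mx -!mulmxA.
rewrite -!scalemxAl !outer_mulmx !vdotBr.
by apply/matrixP => i j; rewrite !mxE; ring.
Qed.

Lemma dt_error_bounded :
  (exists M, forall k, `|d k| <= M) -> (\sum_(0 <= k <oo) ((gm k)^-1)%:E < +oo)%E ->
  exists M, forall k, vdot (e k) (e k) <= M.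
Proof.
move=> [Md d_le] gm_summable.
have inv_ge0 k : 0 <= (gm k)^-1 by rewrite invr_ge0 ltW.
have [S S_ge] := nneseries_partial_bounded inv_ge0 gm_summable.
have d2_le k : d k ^+ 2 <= Md ^+ 2.
  by rewrite -(real_normK (num_real (d k))) lerXn2r ?nnegrE ?(le_trans _ (d_le k)).
exists (Md ^+ 2 * S) => k; apply: le_trans (ler_wpM2l (sqr_ge0 Md) (S_ge k)); rewrite -/(e k).
elim: k => [|k IH].
  rewrite /e /drem_error /drem_D thg_0 Phi0 mul1mx !subrr mul0mx subr0 vdot0l.
  by rewrite big_geq // mulr0.
rewrite dt_errorS big_nat_recr //= mulrDr.
apply: le_trans; first exact: rank1_update_perturbed_sqnorm (gm_gt0 k) erefl.
by apply: lerD => //; rewrite ler_pM2r ?invr_gt0.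
Qed.

Variables (gam : R) (thh : nat -> 'cV[R]_q).
Hypothesis gam_gt0 : 0 < gam.
Hypothesis thhS : forall k, thh k.+1 = thh k
  + (drem_Delta (Phi k) / (gam + drem_Delta (Phi k) ^+ 2)) *:
      (drem_Y (Phi k) (thg k) thg0 - drem_Delta (Phi k) *: thh k).

Let u k := thh k - theta.

(* Once [D] is boundedly invertible, [thh] moves towards the bounded
   [v = D^-1 e] by a convex combination. *)
Lemma dt_param_error_step k kk B : 0 < kk ->
  (forall x, kk * vdot x x <= vdot (drem_D (Phi k) *m x) (drem_D (Phi k) *m x)) ->
  vdot (e k) (e k) <= kk * B ->
  vdot (u k.+1) (u k.+1) <= Num.max (vdot (u k) (u k)) B.
Proof.
move=> kk_gt0 D_lower e_le.
have [v adj_e v_le] := adj_mulmx_bounded kk_gt0 D_lower (e k).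
have {}v_le : vdot v v <= B by rewrite -(ler_pM2l kk_gt0) (le_trans v_le).
set Dl := drem_Delta (Phi k); set l := Dl / (gam + Dl ^+ 2) * Dl.
have l01 : 0 <= l <= 1.
  have den_gt0 : 0 < gam + Dl ^+ 2 by apply: (lt_le_trans gam_gt0); rewrite lerDl sqr_ge0.
  rewrite /l mulrAC -expr2 divr_ge0 ?sqr_ge0 ?(ltW den_gt0) //=.
  by rewrite ler_pdivrMr // mul1r lerDr ltW.
have -> : u k.+1 = (1 - l) *: u k + l *: v.
  rewrite /u thhS (drem_Y_sub _ adj_e) -/Dl /l.
  by apply/matrixP => i j; rewrite !mxE; ring.
apply: le_trans (vdot_convex _ _ l01) _; case/andP: l01 => l_ge0 l_le1.
have := le_max (vdot (u k) (u k)) (vdot (u k) (u k)) B; rewrite lexx => /= h1.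
have h2 : B <= Num.max (vdot (u k) (u k)) B by rewrite le_max lexx orbT.
have h3 : 0 <= 1 - l by lra.
by nra.
Qed.

Lemma dt_param_error_bounded (tau : 'I_q -> nat) :
  \rank (\matrix_(i, j) phi (tau j) i 0) = q ->
  (exists M, forall k, `|d k| <= M) -> (\sum_(0 <= k <oo) ((gm k)^-1)%:E < +oo)%E ->
  exists M, forall k, `|thh k - theta| <= M.
Proof.
move=> rank_q d_bnd gm_summable.
have [K [kk [kk_gt0 D_lower]]] := dt_D_lower rank_q.
have [Me e_le] := dt_error_bounded d_bnd gm_summable.
have u_step k : (K <= k)%N -> vdot (u k.+1) (u k.+1) <= Num.max (vdot (u k) (u k)) (Me / kk).
  by move=> Kk; apply: (dt_param_error_step kk_gt0 (D_lower k Kk)); rewrite mulrC divfK ?gt_eqF.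
have [M u_le] := eventually_bounded_nat (max_step_bounded u_step).
by exists (1 + M) => k; apply: le_trans (mx_norm_le_vdot _) _; rewrite lerD2l u_le.
Qed.

End DiscreteTime.

(** * Calculus on the half-line *)

Section WithinContinuity.
Variables (R : realType) (A : set R).

Lemma within_continuous_comp (T U : topologicalType) (f : R -> T) (g : T -> U) :
  {within A, continuous f} -> continuous g -> {within A, continuous (fun t => g (f t))}.
Proof. by move=> cf cg x; apply: continuous_comp; [exact: cf|exact: cg]. Qed.

Lemma within_continuousD (f g : R -> R) :
  {within A, continuous f} -> {within A, continuous g} ->
  {within A, continuous (fun t => f t + g t)}.
Proof. by move=> cf cg x; apply: continuousD; [exact: cf|exact: cg]. Qed.

Lemma within_continuousN (f : R -> R) :
  {within A, continuous f} -> {within A, continuous (fun t => - f t)}.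
Proof. by move=> cf x; apply: continuousN; exact: cf. Qed.

Lemma within_continuousB (f g : R -> R) :
  {within A, continuous f} -> {within A, continuous g} ->
  {within A, continuous (fun t => f t - g t)}.
Proof. by move=> cf cg; apply: within_continuousD => //; exact: within_continuousN. Qed.

Lemma within_continuousM (f g : R -> R) :
  {within A, continuous f} -> {within A, continuous g} ->
  {within A, continuous (fun t => f t * g t)}.
Proof. by move=> cf cg x; apply: continuousM; [exact: cf|exact: cg]. Qed.

Lemma within_continuous_cst (c : R) : {within A, continuous (fun _ : R => c)}.
Proof. by move=> x; apply: cst_continuous. Qed.

Lemma within_continuous_sum n (h : 'I_n -> R -> R) :
  (forall i, {within A, continuous (h i)}) ->
  {within A, continuous (fun t => \sum_(i < n) h i t)}.
Proof.
elim: n h => [|n IH] h ch; first by under eq_fun do rewrite big_ord0; exact: within_continuous_cst.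
under eq_fun do rewrite big_ord_recr /=.
apply: within_continuousD; last exact: ch.
exact: (IH (fun i => h (widen_ord (leqnSn n) i))).
Qed.

Lemma within_continuous_coef m n (M : R -> 'M[R]_(m, n)) i j :
  {within A, continuous M} -> {within A, continuous (fun t => M t i j)}.
Proof. by move=> cM; exact: within_continuous_comp cM (@coord_continuous _ _ _ i j). Qed.

Definition continuous_coefs q (u : R -> 'cV[R]_q) :=
  forall i, {within A, continuous (fun t => u t i 0)}.

Lemma continuous_coefsW q (u : R -> 'cV[R]_q) :
  {within A, continuous u} -> continuous_coefs u.
Proof. by move=> cu i; exact: within_continuous_coef. Qed.

Lemma continuous_coefsB q (u v : R -> 'cV[R]_q) :
  continuous_coefs u -> continuous_coefs v -> continuous_coefs (fun t => u t - v t).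
Proof. by move=> cu cv i; under eq_fun do rewrite !mxE; exact: within_continuousB. Qed.

Lemma continuous_coefs_cst q (c : 'cV[R]_q) : continuous_coefs (fun _ => c).
Proof. by move=> i; exact: within_continuous_cst. Qed.

Lemma continuous_coefs_mulmxr q (M : R -> 'M[R]_q) (c : 'cV[R]_q) :
  {within A, continuous M} -> continuous_coefs (fun t => M t *m c).
Proof.
move=> cM i; under eq_fun do rewrite mxE.
apply: within_continuous_sum => j.
by apply: within_continuousM; [exact: within_continuous_coef|exact: within_continuous_cst].
Qed.

Lemma within_continuous_vdot q (u v : R -> 'cV[R]_q) :
  continuous_coefs u -> continuous_coefs v ->
  {within A, continuous (fun t => vdot (u t) (v t))}.
Proof. by move=> cu cv; apply: within_continuous_sum => i; exact: within_continuousM. Qed.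

End WithinContinuity.

Section CoefDerivative.
Variable R : realType.

Lemma is_derive_mul (f g : R -> R) (t df dg : R) :
  is_derive t 1 f df -> is_derive t 1 g dg ->
  is_derive t 1 (fun x => f x * g x) (f t * dg + g t * df).
Proof. by move=> ? ?; apply: is_deriveM. Qed.

Lemma is_derive_bigsum n (h : 'I_n -> R -> R) (t : R) (dh : 'I_n -> R) :
  (forall i, is_derive t 1 (h i) (dh i)) ->
  is_derive t 1 (fun x => \sum_(i < n) h i x) (\sum_(i < n) dh i).
Proof. by move=> h_der; have := is_derive_sum h_der; rewrite fct_sumE. Qed.

Lemma is_derive_coef m n (M : R -> 'M[R]_(m, n)) (t : R) (dM : 'M[R]_(m, n)) i j :
  is_derive t 1 M dM -> is_derive t 1 (fun x => M x i j) (dM i j).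
Proof.
move=> [M_der <-]; have Mij_der : derivable (fun x => M x i j) t 1.
  by move/derivable_mxP: M_der; apply.
by apply: DeriveDef => //; rewrite derive_mx // mxE.
Qed.

Definition derive_coefs q (u : R -> 'cV[R]_q) (t : R) (du : 'cV[R]_q) :=
  forall i, is_derive t 1 (fun x => u x i 0) (du i 0).

Lemma derive_coefsW q (u : R -> 'cV[R]_q) (t : R) (du : 'cV[R]_q) :
  is_derive t 1 u du -> derive_coefs u t du.
Proof. by move=> u_der i; exact: is_derive_coef. Qed.

Lemma derive_coefsB q (u v : R -> 'cV[R]_q) (t : R) (du dv : 'cV[R]_q) :
  derive_coefs u t du -> derive_coefs v t dv ->
  derive_coefs (fun x => u x - v x) t (du - dv).
Proof.
move=> u_der v_der i; rewrite !mxE.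
have -> : (fun x => (u x - v x) i 0) = (fun x => u x i 0 - v x i 0).
  by apply/funext => x; rewrite !mxE.
exact: is_deriveB.
Qed.

Lemma derive_coefs_cst q (c : 'cV[R]_q) (t : R) : derive_coefs (fun _ => c) t 0.
Proof. by move=> i; rewrite mxE; exact: is_derive_cst. Qed.

Lemma derive_coefs_mulmxr q (M : R -> 'M[R]_q) (c : 'cV[R]_q) (t : R) (dM : 'M[R]_q) :
  is_derive t 1 M dM -> derive_coefs (fun x => M x *m c) t (dM *m c).
Proof.
move=> M_der i; rewrite mxE.
have -> : (fun x => (M x *m c) i 0) = (fun x => \sum_j M x i j * c j 0).
  by apply/funext => x; rewrite !mxE.
apply: is_derive_bigsum => j.
have := is_derive_mul (is_derive_coef i j M_der) (is_derive_cst (c j 0) t 1).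
by rewrite mulr0 add0r mulrC.
Qed.

Lemma is_derive_vdot q (u v : R -> 'cV[R]_q) (t : R) (du dv : 'cV[R]_q) :
  derive_coefs u t du -> derive_coefs v t dv ->
  is_derive t 1 (fun x => vdot (u x) (v x)) (vdot (u t) dv + vdot du (v t)).
Proof.
move=> u_der v_der; rewrite /vdot -big_split /=.
apply: is_derive_bigsum => i.
by have := is_derive_mul (u_der i) (v_der i); rewrite [_ * du i 0]mulrC.
Qed.

Lemma is_derive_vdot_self q (u : R -> 'cV[R]_q) (t : R) (du : 'cV[R]_q) :
  derive_coefs u t du -> is_derive t 1 (fun x => vdot (u x) (u x)) (2 * vdot (u t) du).
Proof.
by move=> u_der; have := is_derive_vdot u_der u_der; rewrite (vdotC du) -mulr2n mulr_natl.
Qed.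

End CoefDerivative.

Section Monotone.
Variable R : realType.

Lemma derive_le0_nonincr (f df : R -> R) (a b : R) : a <= b ->
  (forall x, a < x -> x < b -> is_derive x 1 f (df x)) ->
  (forall x, a < x -> x < b -> df x <= 0) ->
  {within `[a, b], continuous f} -> f b <= f a.
Proof.
move=> ab f_der df_le0 f_cont.
apply: (@ler0_derive1_le_cc _ f a b) => //; last 2 first.
- by rewrite in_itv /= lexx ab.
- by rewrite in_itv /= lexx ab.
- by move=> x; rewrite in_itv /= => /andP[ax xb]; have [] := f_der x ax xb.
- move=> x; rewrite in_itv /= => /andP[ax xb].
  by have f_der_x := f_der x ax xb; rewrite derive1E derive_val; exact: df_le0.
Qed.

Lemma derive_eq0_const (f : R -> R) (a b : R) : a <= b ->
  (forall x, a < x -> x < b -> is_derive x 1 f 0) ->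
  {within `[a, b], continuous f} -> f b = f a.
Proof.
move=> ab f_der f_cont; apply/eqP; rewrite eq_le.
rewrite (derive_le0_nonincr ab f_der (fun _ _ _ => lexx 0) f_cont) /= -lerN2.
have Nf_der x : a < x -> x < b -> is_derive x 1 (fun x => - f x) 0.
  by move=> ax xb; rewrite -oppr0; apply: is_deriveN; exact: f_der.
exact: derive_le0_nonincr ab Nf_der (fun _ _ _ => lexx 0) (within_continuousN f_cont).
Qed.

Lemma derive_le0_nonincr_halfline (f df : R -> R) (a : R) :
  (forall x, a < x -> is_derive x 1 f (df x)) ->
  (forall x, a < x -> df x <= 0) ->
  {within `[a, +oo[, continuous f} ->
  forall s t, a <= s -> s <= t -> f t <= f s.
Proof.
move=> f_der df_le0 f_cont s t a_s st; apply: (derive_le0_nonincr st).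
- by move=> x sx _; apply: f_der; exact: le_lt_trans a_s sx.
- by move=> x sx _; apply: df_le0; exact: le_lt_trans a_s sx.
- by apply: continuous_subspaceW f_cont; apply: subset_itv; rewrite bnd_simp.
Qed.

Lemma last_crossing (f : R -> R) (T t m : R) : T < t ->
  (forall x, T < x -> {for x, continuous f}) -> f T <= m -> m < f t ->
  exists s, [/\ T <= s, s < t, f s <= m & forall x, s < x -> x <= t -> m < f x].
Proof.
move=> Tt f_cont fT_le ft_gt.
pose S := [set s | T <= s <= t /\ f s <= m].
have ST : S T by rewrite /S /= lexx (ltW Tt).
have S_sup : has_sup S by split; [exists T | exists t => s [/andP[]]].
set s := sup S; have Ts : T <= s by exact: sup_upper_bound.
have st : s <= t by apply: ge_sup => //; [exists T | move=> x [/andP[]]].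
have fs_le : f s <= m.
  rewrite leNgt; apply/negP => fs_gt.
  have Ts' : T < s by rewrite lt_neqAle Ts andbT; apply: contraTneq fs_gt => <-; rewrite -leNgt.
  have [e e_gt0 near_s] := (nbhs_ballP s _).1 (cvgr_gt (f s) (f_cont s Ts') m fs_gt).
  have [x Sx sx] := sup_adherent e_gt0 S_sup.
  have xs : x <= s by exact: sup_upper_bound.
  have : ball s e x by rewrite -ball_normE /= ger0_norm ?subr_ge0 //; rewrite -/s in sx; lra.
  by move/near_s; case: Sx => _ fx_le; rewrite ltNge fx_le.
have s_lt : s < t by rewrite lt_neqAle st andbT; apply: contraTneq ft_gt => <-; rewrite -leNgt.
exists s; split => // x sx xt; rewrite ltNge; apply/negP => fx_le.
have : S x by split => //; rewrite xt andbT; exact: le_trans Ts (ltW sx).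
by move/(sup_upper_bound S_sup); rewrite leNgt sx.
Qed.

Lemma derive_le0_above_bounded (f df : R -> R) (T m : R) :
  (forall x, T < x -> is_derive x 1 f (df x)) ->
  (forall x, T < x -> m <= f x -> df x <= 0) ->
  {within `[T, +oo[, continuous f} ->
  forall t, T <= t -> f t <= Num.max (f T) m.
Proof.
move=> f_der df_le0 f_cont t Tt; set m' := Num.max (f T) m.
have fT_le : f T <= m' by rewrite le_max lexx.
have m_le : m <= m' by rewrite le_max lexx orbT.
rewrite leNgt; apply/negP => ft_gt.
have Tt' : T < t by rewrite lt_neqAle Tt andbT; apply: contraTneq ft_gt => <-; rewrite -leNgt.
have f_cont_x x : T < x -> {for x, continuous f}.
  move=> Tx; have [f_derivable _] := f_der x Tx.
  by apply: differentiable_continuous; apply/derivable1_diffP.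
have [s [Ts st fs_le above]] := last_crossing Tt' f_cont_x fT_le ft_gt.
suff : f t <= f s by lra.
apply: (derive_le0_nonincr (ltW st)).
- by move=> x sx _; apply: f_der; exact: le_lt_trans Ts sx.
- move=> x sx xt; apply: df_le0; first exact: le_lt_trans Ts sx.
  exact: le_trans m_le (ltW (above x sx (ltW xt))).
- by apply: continuous_subspaceW f_cont; apply: subset_itv; rewrite bnd_simp.
Qed.

End Monotone.

Lemma within_continuous_interior (R : realType) (f : R -> R) (a t : R) : a < t ->
  {within `[a, +oo[, continuous f} -> {for t, continuous f}.
Proof.
move=> at_ f_cont.
have : {within `]a, +oo[, continuous f}.
  by apply: continuous_subspaceW f_cont; apply: subset_itvr; rewrite bnd_simp.
rewrite continuous_open_subspace; last exact: interval_open.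
by apply; rewrite inE /= in_itv /= andbT.
Qed.

Lemma continuous_eventually_bounded (R : realType) (f : R -> R) (T M : R) :
  0 <= T -> {within `[0%R, +oo[, continuous f} -> (forall t, T <= t -> f t <= M) ->
  exists M', forall t, 0 <= t -> f t <= M'.
Proof.
move=> T_ge0 f_cont f_le.
have f_cont_T : {within `[0, T], continuous f}.
  by apply: continuous_subspaceW f_cont; apply: subset_itvl; rewrite bnd_simp.
have [c c_in f_max] := EVT_max T_ge0 f_cont_T.
exists (Num.max (f c) M) => t t_ge0; rewrite le_max.
have [tT|Tt] := leP t T; last by rewrite f_le ?orbT // ltW.
by rewrite f_max // in_itv /= t_ge0 tT.
Qed.

Section IntegrableGain.
Variables (R : realType) (g : R -> R).
Local Notation mu := (@lebesgue_measure R).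
Local Notation G t := (\int[mu]_(x in `[0, t]) g x)%R.
Hypothesis g_gt0 : forall t, 0 <= t -> 0 < g t.
Hypothesis g_cont : {within `[0%R, +oo[, continuous g}.
Hypothesis g_fin : (\int[mu]_(t in `[0%R, +oo[) (g t)%:E < +oo)%E.

Let g_ge0 x : `[0%R, +oo[%classic x -> (0 <= (g x)%:E)%E.
Proof. by rewrite /= in_itv /= andbT lee_fin => x_ge0; exact/ltW/g_gt0. Qed.

Let g_mfun : measurable_fun (`[0%R, +oo[ : set R) g.
Proof. exact: subspace_continuous_measurable_fun. Qed.

Lemma gain_integrable_itv b : mu.-integrable `[0, b] (EFin \o g).
Proof.
have g_int : mu.-integrable `[0%R, +oo[ (EFin \o g).
  apply/integrableP; split; first exact/measurable_EFinP.
  rewrite (@eq_integral _ _ _ mu _ (fun x => (g x)%:E) (fun x => `|(EFin \o g) x|%E)) //.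
  by move=> x /[!inE] /g_ge0 gx_ge0 /=; rewrite ger0_norm.
by apply: integrableS g_int => //; apply: subset_itvl; rewrite bnd_simp.
Qed.

Lemma gain_primitive_bounded : exists Gm, forall t, 0 <= t -> 0 <= G t <= Gm.
Proof.
have := g_fin; set Gi := (\int[mu]_(t in `[0%R, +oo[) (g t)%:E)%E => Gi_lt.
have Gi_num : Gi \is a fin_num by rewrite ge0_fin_numE // integral_ge0.
exists (fine Gi) => t t_ge0; apply/andP; split.
  by apply: Rintegral_ge0 => x; rewrite /= in_itv /= => /andP[x_ge0 _]; exact/ltW/g_gt0.
have Gt_le : (\int[mu]_(x in `[0%R, t]) (g x)%:E <= Gi)%E.
  apply: ge0_subset_integral => //; first exact/measurable_EFinP.
  by apply: subset_itvl; rewrite bnd_simp.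
have Gt_num : (\int[mu]_(x in `[0%R, t]) (g x)%:E)%E \is a fin_num.
  rewrite ge0_fin_numE; first exact: le_lt_trans Gt_le Gi_lt.
  apply: integral_ge0 => x; rewrite /= in_itv /= => /andP[x_ge0 _].
  by rewrite lee_fin; exact/ltW/g_gt0.
by rewrite -lee_fin fineK // fineK.
Qed.

Lemma derive_le_gain_bounded (E dE : R -> R) (c : R) : 0 <= c ->
  {within `[0%R, +oo[, continuous E} ->
  (forall t : R, 0 < t -> is_derive t 1 E (dE t)) ->
  (forall t : R, 0 < t -> dE t <= c * g t) ->
  exists M, forall t : R, 0 <= t -> E t <= M.
Proof.
move=> c_ge0 E_cont E_der dE_le; have [Gm G_bnd] := gain_primitive_bounded.
exists (E 0 + c * Gm) => t t_ge0.
have G_der (s : R) : 0 < s -> is_derive s 1 (fun s => G s) (g s).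
  move=> s_gt0; have s_lt : s < s + 1 by rewrite ltrDl.
  have [G_derivable G_der1] := continuous_FTC1_closed s_lt
    (gain_integrable_itv (s + 1)) s_gt0 (within_continuous_interior s_gt0 g_cont).
  by apply: DeriveDef => //; rewrite -derive1E.
have : E t - c * G t <= E 0 - c * G 0.
  apply: (derive_le0_nonincr (f := fun s => E s - c * G s) (df := fun s => dE s - c * g s) t_ge0).
  - move=> s s_gt0 _; apply: is_deriveB; first exact: E_der.
    by have := is_derive_mul (is_derive_cst c s 1) (G_der s s_gt0); rewrite mulr0 addr0.
  - by move=> s s_gt0 _; rewrite subr_le0; exact: dE_le.
  - apply: within_continuousB.
      by apply: continuous_subspaceW E_cont; apply: subset_itvl; rewrite bnd_simp.
    apply: within_continuousM; first exact: within_continuous_cst.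
    exact: parameterized_integral_continuous t_ge0 (gain_integrable_itv t).
have /andP[G0_ge0 _] := G_bnd 0 (lexx 0); have /andP[_ Gt_le] := G_bnd t t_ge0.
have : c * G t <= c * Gm by rewrite ler_wpM2l.
have : 0 <= c * G 0 by rewrite mulr_ge0.
lra.
Qed.

End IntegrableGain.

(** * Continuous time *)

Section ContinuousTime.
Variables (R : realType) (q : nat) (phi : R -> 'cV[R]_q) (gm : R -> R).
Variable Phi : R -> 'M[R]_q.
Hypothesis gm_gt0 : forall t, 0 <= t -> 0 < gm t.
Hypothesis Phi0 : Phi 0 = 1%:M.
Hypothesis Phi_cont : {within `[0%R, +oo[, continuous Phi}.
Hypothesis Phi_der : forall t : R, 0 < t ->
  is_derive t 1 Phi (- gm t *: (phi t *m (phi t)^T *m Phi t)).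

Lemma ct_Phi_mulmx_der x (t : R) : 0 < t ->
  derive_coefs (fun s => Phi s *m x) t ((- gm t * vdot (phi t) (Phi t *m x)) *: phi t).
Proof.
move=> t_gt0; have := derive_coefs_mulmxr x (Phi_der t_gt0).
by rewrite -scalemxAl -(mulmxA (phi t *m _)) outer_mulmx scalerA.
Qed.

Lemma ct_Phi_sqnorm_der x (t : R) : 0 < t ->
  is_derive t 1 (fun s => vdot (Phi s *m x) (Phi s *m x))
    (- (2 * gm t * vdot (phi t) (Phi t *m x) ^+ 2)).
Proof.
move=> t_gt0; have := is_derive_vdot_self (ct_Phi_mulmx_der x t_gt0).
rewrite vdotZr (vdotC (Phi t *m x)); set s := vdot (phi t) _.
by have -> : - (2 * gm t * s ^+ 2) = 2 * (- gm t * s * s) by ring.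
Qed.

Lemma ct_Phi_sqnorm_cont x :
  {within `[0%R, +oo[, continuous (fun s => vdot (Phi s *m x) (Phi s *m x))}.
Proof. by apply: within_continuous_vdot; exact: continuous_coefs_mulmxr. Qed.

Lemma ct_Phi_nonincr x (s t : R) : 0 <= s -> s <= t ->
  vdot (Phi t *m x) (Phi t *m x) <= vdot (Phi s *m x) (Phi s *m x).
Proof.
move=> s_ge0 st; have der_le0 (r : R) : 0 < r -> - (2 * gm r * vdot (phi r) (Phi r *m x) ^+ 2) <= 0.
  by move=> r_gt0; rewrite oppr_le0 mulr_ge0 ?sqr_ge0 ?mulr_ge0 // ltW // gm_gt0 // ltW.
exact: derive_le0_nonincr_halfline (ct_Phi_sqnorm_der x) der_le0
  (@ct_Phi_sqnorm_cont x) _ _ s_ge0 st.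
Qed.

Section Fixed.
Variables (T : R) (x : 'cV[R]_q).
Hypothesis PhiT_isometric : vdot x x <= vdot (Phi T *m x) (Phi T *m x).

Lemma ct_Phi_sqnorm_eq (t : R) : 0 <= t -> t <= T ->
  vdot (Phi t *m x) (Phi t *m x) = vdot x x.
Proof.
move=> t_ge0 tT; apply/eqP; rewrite eq_le.
have := ct_Phi_nonincr x (lexx 0) t_ge0; rewrite Phi0 mul1mx => ->.
exact: le_trans PhiT_isometric (ct_Phi_nonincr x t_ge0 tT).
Qed.

Lemma ct_Phi_orth (t : R) : 0 < t -> t < T -> vdot (phi t) (Phi t *m x) = 0.
Proof.
move=> t_gt0 tT.
have near_const : \forall s \near t, vdot (Phi s *m x) (Phi s *m x) = vdot x x.
  have r_gt0 : 0 < Num.min t (T - t) by rewrite lt_min t_gt0 subr_gt0.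
  apply/nbhs_ballP; exists (Num.min t (T - t)) => // s.
  rewrite -ball_normE /= lt_min => /andP[ts1 ts2].
  have := ler_norm (t - s); have := ler_norm (s - t); rewrite distrC => h1 h2.
  by apply: ct_Phi_sqnorm_eq; lra.
have [_] := near_eq_is_derive near_const (ct_Phi_sqnorm_der x t_gt0).
rewrite derive_cst => /esym/eqP; rewrite oppr_eq0 mulf_eq0 => /orP[|].
  by rewrite mulf_eq0 pnatr_eq0 /= gt_eqF // gm_gt0 // ltW.
by rewrite sqrf_eq0 => /eqP.
Qed.

Lemma ct_Phi_fix (t : R) : 0 <= t -> t <= T -> Phi t *m x = x.
Proof.
move=> t_ge0 tT; apply/matrixP => i j; rewrite (ord1 j).
have h_der (s : R) : 0 < s -> s < t -> is_derive s 1 (fun s => (Phi s *m x) i 0) 0.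
  move=> s_gt0 st; have := ct_Phi_mulmx_der x s_gt0 i.
  by rewrite ct_Phi_orth ?(lt_le_trans st) // mulr0 scale0r mxE.
have h_cont : {within `[0, t], continuous (fun s => (Phi s *m x) i 0)}.
  have coefs_cont := continuous_coefs_mulmxr (c := x) Phi_cont.
  apply: continuous_subspaceW (coefs_cont i).
  by apply: subset_itvl; rewrite bnd_simp.
have := derive_eq0_const t_ge0 h_der h_cont.
by rewrite /= Phi0 mul1mx.
Qed.

End Fixed.

Lemma ct_D_lower (tau : 'I_q -> R) : (forall i, 0 < tau i) ->
  \rank (\matrix_(i, j) phi (tau j) i 0) = q ->
  exists T kk, [/\ 0 < T, 0 < kk & forall t, T <= t ->
    forall x, kk * vdot x x <= vdot (drem_D (Phi t) *m x) (drem_D (Phi t) *m x)].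
Proof.
move=> tau_gt0 rank_q; pose T := 1 + \sum_i tau i.
have sum_ge0 I : 0 <= \sum_(i | I i) tau i by apply: sumr_ge0 => i _; exact: ltW.
have T_gt0 : 0 < T by rewrite /T; have := sum_ge0 xpredT; lra.
have tau_lt i : tau i < T.
  by rewrite /T (bigD1 i) //=; have := sum_ge0 (predC1 i); lra.
have PhiT_lt x : x != 0 -> vdot (Phi T *m x) (Phi T *m x) < vdot x x.
  move=> x_neq0; rewrite ltNge; apply/negP => PhiT_iso; move/negP: x_neq0; apply.
  apply/eqP/(rank_vdot_eq0 rank_q) => i; rewrite vdotC.
  rewrite -{1}(ct_Phi_fix PhiT_iso (ltW (tau_gt0 i)) (ltW (tau_lt i))).
  by apply: (ct_Phi_orth PhiT_iso); [exact: tau_gt0 | exact: tau_lt].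
have [eps eps_01 PhiT_le] := contraction_uniform PhiT_lt.
exists T, (eps ^+ 2 / 4); split => //.
  by case/andP: eps_01 => eps_gt0 _; rewrite divr_gt0 ?exprn_gt0.
move=> t Tt; apply: subr1mx_sqr_lower => // x.
exact: le_trans (ct_Phi_nonincr x (ltW T_gt0) Tt) (PhiT_le x).
Qed.

Variables (theta thg0 : 'cV[R]_q) (d : R -> R) (thg : R -> 'cV[R]_q).
Hypothesis thg_cont : {within `[0%R, +oo[, continuous thg}.
Hypothesis thg_der : forall t : R, 0 < t -> is_derive t 1 thg
  (- gm t *: (phi t *m (phi t)^T *m thg t)
   + (gm t * (vdot (phi t) theta + d t)) *: phi t).

Let e t := drem_error (Phi t) (thg t) thg0 theta.
Let e_E t : e t = thg t - Phi t *m (thg0 - theta) - theta.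
Proof. exact: drem_errorE. Qed.

Lemma ct_error_sqnorm_der (t : R) : 0 < t ->
  is_derive t 1 (fun s => vdot (e s) (e s))
    (2 * (gm t * (d t - vdot (phi t) (e t))) * vdot (phi t) (e t)).
Proof.
move=> t_gt0; have e_der := derive_coefsB (derive_coefsB (derive_coefsW (thg_der t_gt0))
  (derive_coefs_mulmxr (thg0 - theta) (Phi_der t_gt0))) (derive_coefs_cst theta t).
have := is_derive_vdot_self e_der; set de := (X in 2 * vdot _ X).
have -> : de = (gm t * (d t - vdot (phi t) (e t))) *: phi t.
  rewrite /de e_E subr0 -!scalemxAl -!(mulmxA (phi t *m _)) !outer_mulmx !vdotBr.
  by apply/matrixP => i j; rewrite !mxE; ring.
rewrite vdotZr -e_E (vdotC _ (phi t)) mulrA.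
by under eq_fun do rewrite -e_E.
Qed.

Lemma ct_error_sqnorm_cont : {within `[0%R, +oo[, continuous (fun s => vdot (e s) (e s))}.
Proof.
have -> : e = fun s => thg s - Phi s *m (thg0 - theta) - theta.
  by apply/funext => s; rewrite e_E.
have e_cont : continuous_coefs `[0%R, +oo[ (fun s => thg s - Phi s *m (thg0 - theta) - theta).
  apply: continuous_coefsB; last exact: continuous_coefs_cst.
  by apply: continuous_coefsB; [exact: continuous_coefsW | exact: continuous_coefs_mulmxr].
by apply: within_continuous_vdot.
Qed.

Lemma ct_error_bounded :
  (exists M, forall t, 0 <= t -> `|d t| <= M) ->
  {within `[0%R, +oo[, continuous gm} ->
  (\int[lebesgue_measure]_(t in `[0%R, +oo[) (gm t)%:E < +oo)%E ->
  exists M, forall t, 0 <= t -> vdot (e t) (e t) <= M.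
Proof.
move=> [Md d_le] gm_cont gm_fin.
apply: (derive_le_gain_bounded gm_gt0 gm_cont gm_fin (c := Md ^+ 2 / 2)).
- by rewrite divr_ge0 ?sqr_ge0.
- exact: ct_error_sqnorm_cont.
- exact: ct_error_sqnorm_der.
move=> t t_gt0; have gm_t := gm_gt0 (ltW t_gt0); set s := vdot (phi t) (e t).
(* completing the square: [2 (d - s) s <= d^2 / 2] *)
have d2_le : d t ^+ 2 <= Md ^+ 2.
  by rewrite -(real_normK (num_real (d t))) lerXn2r ?nnegrE ?(le_trans _ (d_le t (ltW t_gt0))).
have : 0 <= gm t * (s - d t / 2) ^+ 2 by rewrite mulr_ge0 ?sqr_ge0 ?(ltW gm_t).
have : gm t * d t ^+ 2 <= gm t * Md ^+ 2 by rewrite ler_pM2l.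
nra.
Qed.

Variables (gam : R) (thh : R -> 'cV[R]_q).
Hypothesis gam_gt0 : 0 < gam.
Hypothesis thh_cont : {within `[0%R, +oo[, continuous thh}.
Hypothesis thh_der : forall t : R, 0 < t -> is_derive t 1 thh
  ((gam * drem_Delta (Phi t)) *:
     (drem_Y (Phi t) (thg t) thg0 - drem_Delta (Phi t) *: thh t)).

Let u t := thh t - theta.

Lemma ct_param_error_sqnorm_der (t : R) : 0 < t ->
  is_derive t 1 (fun s => vdot (u s) (u s)) (2 * vdot (u t)
    ((gam * drem_Delta (Phi t)) *:
       (drem_Y (Phi t) (thg t) thg0 - drem_Delta (Phi t) *: thh t))).
Proof.
move=> t_gt0; have := derive_coefsB (derive_coefsW (thh_der t_gt0)) (derive_coefs_cst theta t).
by move/is_derive_vdot_self; rewrite subr0.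
Qed.

(* With [D v = e], the flow reads [u' = - gam Delta^2 (u - v)], which pulls
   [u] inwards as soon as [|u| >= |v|]. *)
Lemma ct_param_error_der_le0 (t kk B : R) : 0 < kk ->
  (forall x, kk * vdot x x <= vdot (drem_D (Phi t) *m x) (drem_D (Phi t) *m x)) ->
  vdot (e t) (e t) <= kk * B -> B <= vdot (u t) (u t) ->
  2 * vdot (u t) ((gam * drem_Delta (Phi t)) *:
      (drem_Y (Phi t) (thg t) thg0 - drem_Delta (Phi t) *: thh t)) <= 0.
Proof.
move=> kk_gt0 D_lower e_le B_le.
have [v adj_e v_le] := adj_mulmx_bounded kk_gt0 D_lower (e t).
have {}v_le : vdot v v <= B by rewrite -(ler_pM2l kk_gt0) (le_trans v_le).
rewrite (drem_Y_sub _ adj_e) scalerA vdotZr vdotBr -/(u t).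
have := vdot_mul2_le (u t) v; set Dl := drem_Delta (Phi t).
have : 0 <= gam * Dl * Dl by rewrite -mulrA mulr_ge0 ?(ltW gam_gt0) // -expr2 sqr_ge0.
set c := gam * Dl * Dl => c_ge0 uv_le.
rewrite pmulr_rle0 // mulr_ge0_le0 // subr_le0.
lra.
Qed.

Lemma ct_param_error_bounded (tau : 'I_q -> R) :
  (forall i, 0 < tau i) -> \rank (\matrix_(i, j) phi (tau j) i 0) = q ->
  (exists M, forall t, 0 <= t -> `|d t| <= M) ->
  {within `[0%R, +oo[, continuous gm} ->
  (\int[lebesgue_measure]_(t in `[0%R, +oo[) (gm t)%:E < +oo)%E ->
  exists M, forall t, 0 <= t -> `|thh t - theta| <= M.
Proof.
move=> tau_gt0 rank_q d_bnd gm_cont gm_fin.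
have [T [kk [T_gt0 kk_gt0 D_lower]]] := ct_D_lower tau_gt0 rank_q.
have [Me e_le] := ct_error_bounded d_bnd gm_cont gm_fin.
have u_cont : continuous_coefs `[0%R, +oo[ u.
  by apply: continuous_coefsB; [exact: continuous_coefsW | exact: continuous_coefs_cst].
have V_cont : {within `[0%R, +oo[, continuous (fun s => vdot (u s) (u s))}.
  by apply: within_continuous_vdot.
have V_le t : T <= t -> vdot (u t) (u t) <= Num.max (vdot (u T) (u T)) (Me / kk).
  apply: (derive_le0_above_bounded (f := fun s => vdot (u s) (u s))
    (df := fun s => 2 * vdot (u s) ((gam * drem_Delta (Phi s)) *:
       (drem_Y (Phi s) (thg s) thg0 - drem_Delta (Phi s) *: thh s)))).
  - by move=> s Ts; apply: ct_param_error_sqnorm_der; exact: lt_trans T_gt0 Ts.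
  - move=> s Ts B_le; apply: (ct_param_error_der_le0 kk_gt0 (D_lower s (ltW Ts)) _ B_le).
    by rewrite mulrC divfK ?gt_eqF // e_le // ltW // (lt_trans T_gt0).
  - by apply: continuous_subspaceW V_cont; apply: subset_itvr; rewrite bnd_simp ltW.
have [M u_le] := continuous_eventually_bounded (ltW T_gt0) V_cont V_le.
by exists (1 + M) => t t_ge0; apply: le_trans (mx_norm_le_vdot _) _; rewrite lerD2l u_le.
Qed.

End ContinuousTime.

Theorem proposition4 :
  (* ---------------- Continuous time ---------------- *)
  (forall (R : realType) (q : nat) (theta : 'cV[R]_q)
     (phi : R -> 'cV[R]_q) (d y : R -> R) (gamma_g : R -> R) (gam : R)
     (thg0 : 'cV[R]_q) (thg : R -> 'cV[R]_q) (Phi : R -> 'M[R]_q)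
     (thh : R -> 'cV[R]_q),
   (* bounded, continuous regressor *)
   (exists M : R, forall t, 0 <= t -> `|phi t| <= M) ->
   {within `[0%R, +oo[, continuous phi} ->
   (* bounded perturbation and perturbed regression *)
   (exists M : R, forall t, 0 <= t -> `|d t| <= M) ->
   (forall t, 0 <= t -> y t = ((phi t)^T *m theta) 0 0 + d t) ->
   (* identifiability *)
   (exists tau : 'I_q -> R, (forall i, 0 < tau i) /\
      \rank (\matrix_(i < q, j < q) phi (tau j) i 0) = q) ->
   (* gain *)
   (forall t, 0 <= t -> 0 < gamma_g t) ->
   {within `[0%R, +oo[, continuous gamma_g} ->
   (\int[lebesgue_measure]_(t in `[0%R, +oo[) (gamma_g t)%:E < +oo)%E ->
   0 < gam ->
   (* estimator dynamics *)
   thg 0 = thg0 ->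
   Phi 0 = 1%:M ->
   {within `[0%R, +oo[, continuous thg} ->
   {within `[0%R, +oo[, continuous Phi} ->
   {within `[0%R, +oo[, continuous thh} ->
   (forall t : R, 0 < t -> is_derive t 1 thg
      (- gamma_g t *: (phi t *m (phi t)^T *m thg t)
       + (gamma_g t * y t) *: phi t)) ->
   (forall t : R, 0 < t -> is_derive t 1 Phi
      (- gamma_g t *: (phi t *m (phi t)^T *m Phi t))) ->
   (forall t : R, 0 < t -> is_derive t 1 thh
      ((gam * drem_Delta (Phi t)) *:
         (drem_Y (Phi t) (thg t) thg0 - drem_Delta (Phi t) *: thh t))) ->
   (* conclusion: bounded parameter error *)
   exists M : R, forall t, 0 <= t -> `|thh t - theta| <= M)
  /\
  (* ---------------- Discrete time ---------------- *)
  (forall (R : realType) (q : nat) (theta : 'cV[R]_q)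
     (phi : nat -> 'cV[R]_q) (d y : nat -> R) (gamma_g : nat -> R) (gam : R)
     (thg0 : 'cV[R]_q) (thg : nat -> 'cV[R]_q) (Phi : nat -> 'M[R]_q)
     (thh : nat -> 'cV[R]_q),
   (exists M : R, forall k, `|phi k| <= M) ->
   (exists M : R, forall k, `|d k| <= M) ->
   (forall k, y k = ((phi k)^T *m theta) 0 0 + d k) ->
   (exists tau : 'I_q -> nat,
      \rank (\matrix_(i < q, j < q) phi (tau j) i 0) = q) ->
   (forall k, 0 < gamma_g k) ->
   (\sum_(0 <= k <oo) ((gamma_g k)^-1)%:E < +oo)%E ->
   0 < gam ->
   let g := fun k => (gamma_g k + ((phi k)^T *m phi k) 0 0)^-1 in
   thg 0%N = thg0 ->
   Phi 0%N = 1%:M ->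
   (forall k, thg k.+1 = (1%:M - g k *: (phi k *m (phi k)^T)) *m thg k
                         + (g k * y k) *: phi k) ->
   (forall k, Phi k.+1 = (1%:M - g k *: (phi k *m (phi k)^T)) *m Phi k) ->
   (forall k, thh k.+1 = thh k
      + (drem_Delta (Phi k) / (gam + drem_Delta (Phi k) ^+ 2)) *:
          (drem_Y (Phi k) (thg k) thg0 - drem_Delta (Phi k) *: thh k)) ->
   exists M : R, forall k, `|thh k - theta| <= M).
Proof.
split.
- move=> R q theta phi d y gm gam thg0 thg Phi thh _ _ d_bnd y_def [tau [tau_gt0 rank_q]]
    gm_gt0 gm_cont gm_fin gam_gt0 _ Phi0 thg_cont Phi_cont thh_cont thg_der Phi_der thh_der.
  have thg_der' (t : R) : 0 < t -> is_derive t 1 thg (- gm t *: (phi t *m (phi t)^T *m thg t)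
      + (gm t * (vdot (phi t) theta + d t)) *: phi t).
    by move=> t_gt0; rewrite -mulmx_trmx00 -y_def ?ltW //; exact: thg_der.
  exact: (ct_param_error_bounded gm_gt0 Phi0 Phi_cont Phi_der thg_cont thg_der'
    gam_gt0 thh_cont thh_der tau_gt0 rank_q d_bnd gm_cont gm_fin).
- move=> R q theta phi d y gm gam thg0 thg Phi thh _ d_bnd y_def [tau rank_q]
    gm_gt0 gm_sum gam_gt0 g thg_0 Phi0 thgS PhiS thhS.
  have gE k : g k = dt_gain phi gm k by rewrite /g mulmx_trmx00.
  apply: (dt_param_error_bounded gm_gt0 Phi0 _ thg_0 _ gam_gt0 thhS rank_q d_bnd gm_sum).
  + by move=> k; rewrite PhiS gE.
  + by move=> k; rewrite thgS gE y_def mulmx_trmx00.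
Qed.
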